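(* Let $V$ be a real vector space and $C$ a cone in $V$. Suppose $Y$ is a decomposably $C$-antichain-convex subset of $V$ and put $K=\operatorname{co}(C\cup\{0\})$. Then: (1) for each $y\in\operatorname{co}(Y)$ there exists $z\in Y$ with $z\in y+K$; (2) for each $y\in\operatorname{co}(Y)$ there exists $x\in Y$ with $y\in x+K$.
   Context: A cone in a real vector space $V$ is a subset $C$ with $\lambda C\subseteq C$ for all $\lambda>0$ (it may be empty and need not contain $0$). A subset $S\subseteq V$ is $C$-antichain-convex iff for all $x,y\in S$ and $\lambda\in[0,1]$ with $y-x\notin C\cup(-C)$ one has $\lambda x+(1-\lambda)y\in S$. A set $S$ is decomposably $C$-antichain-convex iff $S=S_1+\dots+S_n$ (Minkowski sum) for some finite collection of $C$-antichain-convex subsets $S_1,\dots,S_n$ of $V$. $\operatorname{co}$ denotes the convex hull. *)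

From HB Require Import structures.
From mathcomp Require Import all_boot all_order all_algebra.
From mathcomp Require Import reals.
Set Implicit Arguments. Unset Strict Implicit. Unset Printing Implicit Defensive.
Import Order.TTheory GRing.Theory Num.Theory.
Local Open Scope ring_scope.

(* C is a cone: lambda C ⊆ C for every lambda > 0 (may be empty, need not contain 0). *)
Definition is_cone (R : realType) (V : lmodType R) (C : V -> Prop) : Prop :=
  forall (lam : R) (c : V), 0 < lam -> C c -> C (lam *: c).

Definition oppset (R : realType) (V : lmodType R) (C : V -> Prop) : V -> Prop :=
  fun v => exists c, C c /\ v = - c.

Definition antichain_convex (R : realType) (V : lmodType R) (C S : V -> Prop) : Prop :=
  forall (x y : V) (lam : R), S x -> S y -> 0 <= lam -> lam <= 1 ->
    ~ (C (y - x) \/ oppset C (y - x)) ->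
    S (lam *: x + (1 - lam) *: y).

Definition minkowski_sum (R : realType) (V : lmodType R) (n : nat)
  (S : 'I_n -> V -> Prop) : V -> Prop :=
  fun v => exists p : 'I_n -> V, (forall i, S i (p i)) /\ v = \sum_(i < n) p i.

Definition decomp_antichain_convex (R : realType) (V : lmodType R) (C Y : V -> Prop) : Prop :=
  exists (n : nat) (S : 'I_n -> V -> Prop),
    (forall i, antichain_convex C (S i)) /\ Y = minkowski_sum S.

Definition co (R : realType) (V : lmodType R) (S : V -> Prop) : V -> Prop :=
  fun v => exists (n : nat) (w : 'I_n -> R) (p : 'I_n -> V),
    (forall i, 0 <= w i) /\ \sum_(i < n) w i = 1 /\ (forall i, S (p i)) /\
    v = \sum_(i < n) w i *: p i.

From HB Require Import structures.
From mathcomp Require Import all_boot all_order all_algebra.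
From mathcomp Require Import reals.
From Stdlib Require Import Classical.
Import Order.TTheory GRing.Theory Num.Theory.
Local Open Scope ring_scope.
Set Implicit Arguments. Unset Strict Implicit.

(* Write y <= z when z - y lies in the convex cone generated by C. Fix an
   antichain-convex S and x, y in S. If y - x lies in C or in -C, one of x, y
   dominates the whole segment [x, y]; otherwise the segment lies in S. Hence
   the set of points dominated by some point of S is convex; it contains S,
   hence co S. Applying this to -S gives the lower bound. Both bounds are
   additive, and co of a Minkowski sum lies in the sum of the hulls, so they
   pass to decomposable sets. *)

Section ConicHull.
Variables (R : realType) (V : lmodType R) (C : V -> Prop).
Hypothesis coneC : is_cone C.

(* Stands in for K: closed under addition by construction, and contained
   in K by conic_hull_sub_co. *)
Definition conic_hull (k : V) : Prop :=
  exists s : seq V, (forall x, x \in s -> C x \/ x = 0) /\ k = \sum_(x <- s) x.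

Lemma conic_hull0 : conic_hull 0.
Proof. by exists [::]; rewrite big_nil. Qed.

Lemma conic_hullD a b : conic_hull a -> conic_hull b -> conic_hull (a + b).
Proof.
move=> [s [Cs ->]] [t [Ct ->]]; exists (s ++ t); rewrite big_cat; split=> //.
by move=> x; rewrite mem_cat => /orP [/Cs | /Ct].
Qed.

Lemma conic_hullZ (t : R) a : 0 <= t -> conic_hull a -> conic_hull (t *: a).
Proof.
move=> t_ge0 [s [Cs ->]]; exists (map ( *:%R t) s); rewrite big_map scaler_sumr.
split=> // _ /mapP [x /Cs [Cx | ->] ->]; last by right; rewrite scaler0.
case: (eqVneq t 0) => [-> | t_neq0]; first by right; rewrite scale0r.
by left; apply: coneC; rewrite // lt_def t_neq0.
Qed.

Lemma mem_conic_hull c : C c -> conic_hull c.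
Proof. by move=> Cc; exists [:: c]; rewrite big_seq1; split=> // x /[!inE] /eqP ->; left. Qed.

Lemma conic_hull_sub_co k : conic_hull k -> co (fun v => C v \/ v = 0) k.
Proof.
move=> [s [Cs ->]]; set s0 := 0 :: s.
have -> : \sum_(x <- s) x = \sum_(x <- s0) x by rewrite big_cons add0r.
have m_gt0 : 0 < (size s0)%:R :> R by rewrite ltr0n.
exists (size s0), (fun=> (size s0)%:R^-1), (fun i => (size s0)%:R *: nth 0 s0 i).
split; first by move=> _; rewrite invr_ge0 ltW.
split; first by rewrite sumr_const card_ord -[_ *+ _]mulr_natr mulVf ?gt_eqF.
split.
  move=> i; have : nth 0 s0 i \in s0 by rewrite mem_nth.
  rewrite inE => /orP [/eqP -> | /Cs [Cx | ->]]; try by right; rewrite scaler0.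
  by left; apply: coneC.
rewrite (big_nth 0) big_mkord; apply: eq_bigr => i _.
by rewrite scalerA mulVf ?gt_eqF // scale1r.
Qed.

End ConicHull.

Section ConvexHull.
Variables (R : realType) (V : lmodType R).

Definition convex_set (Q : V -> Prop) : Prop :=
  forall a b (l : R), Q a -> Q b -> 0 <= l -> l <= 1 -> Q (l *: a + (1 - l) *: b).

Lemma sub_convex_comb (x y : V) (l : R) :
  y - (l *: x + (1 - l) *: y) = l *: (y - x).
Proof. by rewrite scalerBl scale1r scalerBr opprD opprB addrA addrC addrA subrK. Qed.

Lemma co_sub_convex (S Q : V -> Prop) :
  (forall v, S v -> Q v) -> convex_set Q -> forall y, co S y -> Q y.
Proof.
move=> SQ convexQ _ [n [w [p [w_ge0 [w1 [Sp ->]]]]]].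
elim: n w p w_ge0 w1 Sp => [|n IHn] w p w_ge0 + Sp.
  by rewrite big_ord0 => /eqP; rewrite eq_sym oner_eq0.
rewrite !big_ord_recr /=; set W := \sum_(i < n) _ => w1.
have W_ge0 : 0 <= W by apply: sumr_ge0.
have -> : w ord_max = 1 - W by rewrite -w1 addrAC subrr add0r.
have [W0 | W_neq0] := eqVneq W 0.
  rewrite big1 ?add0r => [|i _]; last first.
    by rewrite (psumr_eq0P (fun j _ => w_ge0 _) W0) ?scale0r.
  by rewrite W0 subr0 scale1r; apply/SQ/Sp.
set q := fun i : 'I_n => p (widen_ord (leqnSn n) i).
set u := fun i : 'I_n => w (widen_ord (leqnSn n) i) / W.
have -> : \sum_(i < n) w (widen_ord (leqnSn n) i) *: q i = W *: \sum_(i < n) u i *: q i.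
  by rewrite scaler_sumr; apply: eq_bigr => i _; rewrite scalerA mulrC divfK.
apply: convexQ => //; last by rewrite -w1 lerDl.
- by apply: IHn => [i | | i]; [exact: divr_ge0 | rewrite -mulr_suml mulfV | exact: Sp].
- exact/SQ/Sp.
Qed.

Lemma co_opp (S : V -> Prop) y : co S y -> co (fun v => S (- v)) (- y).
Proof.
move=> [n [w [p [w_ge0 [w1 [Sp ->]]]]]]; exists n, w, (fun i => - p i).
do !split=> //; first by move=> i; rewrite opprK.
by rewrite -sumrN; apply: eq_bigr => i _; rewrite scalerN.
Qed.

Lemma co_minkowski_sum n (S : 'I_n -> V -> Prop) y :
  co (minkowski_sum S) y ->
  exists P : 'I_n -> V, (forall i, co (S i) (P i)) /\ y = \sum_(i < n) P i.
Proof.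
move=> [m [w [q [w_ge0 [w1 [Sq ->]]]]]]; have [P SP] := fin_all_exists Sq.
exists (fun i => \sum_(j < m) w j *: P j i); split.
  move=> i; exists m, w, (fun j => P j i); do !split=> //.
  by move=> j; case: (SP j).
rewrite exchange_big; apply: eq_bigr => j _.
by case: (SP j) => _ ->; rewrite scaler_sumr.
Qed.

Lemma co_minkowski_sum_bound n (S : 'I_n -> V -> Prop) (D : V -> Prop) :
  D 0 -> (forall a b, D a -> D b -> D (a + b)) ->
  (forall i y, co (S i) y -> exists z, S i z /\ D (z - y)) ->
  forall y, co (minkowski_sum S) y -> exists z, minkowski_sum S z /\ D (z - y).
Proof.
move=> D0 DD domS _ /co_minkowski_sum [P [coP ->]].
have [Z SZ] := fin_all_exists (fun i => domS i (P i) (coP i)).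
exists (\sum_(i < n) Z i); split; first by exists Z; split=> // i; case: (SZ i).
by rewrite -sumrB; apply: big_ind => // i _; case: (SZ i).
Qed.

End ConvexHull.

Section AntichainConvex.
Variables (R : realType) (V : lmodType R) (C S : V -> Prop).
Hypotheses (coneC : is_cone C) (acS : antichain_convex C S).

Lemma antichain_convex_segment_upper x y (l : R) :
  S x -> S y -> 0 <= l -> l <= 1 ->
  exists z, S z /\ conic_hull C (z - (l *: x + (1 - l) *: y)).
Proof.
move=> Sx Sy l_ge0 l_le1.
have [[Cyx | [c [Cc yxE]]] | incomparable] :=
  classic (C (y - x) \/ oppset C (y - x)).
- by exists y; rewrite sub_convex_comb; split; last exact/conic_hullZ/mem_conic_hull.
- exists x; split=> //.
  (* the same segment, traversed from y to x *)
  rewrite [l *: x + _]addrC -[in l *: x](subKr 1 l) sub_convex_comb.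
  have -> : x - y = c by rewrite -opprB yxE opprK.
  by apply/conic_hullZ/mem_conic_hull; rewrite ?subr_ge0.
- exists (l *: x + (1 - l) *: y); rewrite subrr.
  by split; [exact: acS | exact: conic_hull0].
Qed.

Lemma antichain_convex_upper_convex :
  convex_set (fun y => exists z, S z /\ conic_hull C (z - y)).
Proof.
move=> a b l [za [Sa Ka]] [zb [Sb Kb]] l_ge0 l_le1.
have [z [Sz Kz]] := antichain_convex_segment_upper Sa Sb l_ge0 l_le1.
exists z; split=> //; rewrite -[z](subrK (l *: za + (1 - l) *: zb)) -addrA.
apply: conic_hullD => //.
have -> : l *: za + (1 - l) *: zb - (l *: a + (1 - l) *: b) =
          l *: (za - a) + (1 - l) *: (zb - b) by rewrite !scalerBr addrACA opprD.
by apply: conic_hullD; apply: conic_hullZ; rewrite ?subr_ge0.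
Qed.

Lemma antichain_convex_opp : antichain_convex C (fun v => S (- v)).
Proof.
move=> x y l Sx Sy l_ge0 l_le1 incomparable.
rewrite opprD -!scalerN; apply: acS => // -[Cd | [c [Cc dE]]]; apply: incomparable.
  by right; exists (- y - - x); split=> //; rewrite opprB opprK addrC.
by left; have -> : y - x = c by rewrite -[c]opprK -dE opprB opprK addrC.
Qed.

Lemma co_antichain_convex_upper y : co S y -> exists z, S z /\ conic_hull C (z - y).
Proof.
apply: (co_sub_convex _ antichain_convex_upper_convex) => v Sv.
by exists v; rewrite subrr; split; last exact: conic_hull0.
Qed.

End AntichainConvex.

Lemma co_antichain_convex_lower (R : realType) (V : lmodType R) (C S : V -> Prop) :
  is_cone C -> antichain_convex C S ->
  forall y, co S y -> exists x, S x /\ conic_hull C (y - x).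
Proof.
move=> coneC acS y /co_opp /(co_antichain_convex_upper coneC (antichain_convex_opp acS)).
by move=> [z [Sz]]; rewrite opprK => Kz; exists (- z); rewrite !opprK addrC.
Qed.

Theorem theorem3 (R : realType) (V : lmodType R) (C Y : V -> Prop) :
  is_cone C ->
  decomp_antichain_convex C Y ->
  let K := co (fun v => C v \/ v = 0) in
  (forall y, co Y y -> exists z, Y z /\ exists k, K k /\ z = y + k) /\
  (forall y, co Y y -> exists x, Y x /\ exists k, K k /\ y = x + k).
Proof.
move=> coneC [n [S [acS ->]]] K; split=> y coY.
- have [z [Yz Kz]] := co_minkowski_sum_bound (conic_hull0 C) (@conic_hullD _ _ C)
    (fun i => co_antichain_convex_upper coneC (acS i)) coY.
  exists z; split=> //; exists (z - y).
  by split; [exact: conic_hull_sub_co | rewrite addrC subrK].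
- have negKD a b : conic_hull C (- a) -> conic_hull C (- b) -> conic_hull C (- (a + b)).
    by rewrite opprD; exact: conic_hullD.
  have negK0 : conic_hull C (- 0) by rewrite oppr0; exact: conic_hull0.
  have lowerS i y' : co (S i) y' -> exists x, S i x /\ conic_hull C (- (x - y')).
    by move=> /(co_antichain_convex_lower coneC (acS i)) [x Kx]; exists x; rewrite opprB.
  have [x [Yx Kx]] := co_minkowski_sum_bound negK0 negKD lowerS coY.
  exists x; split=> //; exists (y - x); rewrite opprB in Kx.
  by split; [exact: conic_hull_sub_co | rewrite addrC subrK].
Qed.
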